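(* Let $A$ and $B$ be two physical systems with Hamiltonians $H^A=\sum_{x=1}^m a_x|x\rangle\langle x|^A$ and $H^B=\sum_{y=1}^n b_y|y\rangle\langle y|^B$ that are relatively non-degenerate. Then a quantum channel $\mathcal{N}:A\to B$ is time-translation covariant if and only if $$\mathcal{N}^{A\to B}=\Delta^{B\to B}\circ\mathcal{N}^{A\to B}\circ\Delta^{A\to A},$$ where $\Delta^{A\to A}(\rho)=\sum_{x=1}^m\langle x|\rho|x\rangle|x\rangle\langle x|$ and $\Delta^{B\to B}(\rho)=\sum_{y=1}^n\langle y|\rho|y\rangle|y\rangle\langle y|$ are the completely dephasing channels in the energy eigenbases.
   Context: The Hamiltonians are relatively non-degenerate if for all $x,x'\in[m]$ and $y,y'\in[n]$, $a_x-a_{x'}=b_y-b_{y'}$ implies $x=x'$ and $y=y'$ (in particular both are non-degenerate, so the eigenbases are unique up to phases). A channel (CPTP map) $\mathcal{E}:A\to B$ is time-translation covariant if $\mathcal{E}(e^{-iH^At}\rho e^{iH^At})=e^{-iH^Bt}\mathcal{E}(\rho)e^{iH^Bt}$ for all $t\in\mathbb{R}$ and all density matrices $\rho$ on $A$. *)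

From HB Require Import structures.
From mathcomp Require Import all_boot all_order all_algebra.
From mathcomp Require Import complex mxtens.
From mathcomp Require Import reals trigo.
Set Implicit Arguments. Unset Strict Implicit. Unset Printing Implicit Defensive.
Import Order.TTheory GRing.Theory Num.Theory.
Local Open Scope ring_scope.

Section QDefs.
Variable R : realType.
Local Notation C := R[i].

Definition adj {p q : nat} (A : 'M[C]_(p, q)) : 'M[C]_(q, p) :=
  (map_mx (fun z : C => z^*) A)^T.

Definition psd {k : nat} (A : 'M[C]_k) : Prop :=
  forall v : 'cV[C]_k, 0 <= (adj v *m A *m v) 0 0.

Definition density {k : nat} (rho : 'M[C]_k) : Prop := psd rho /\ \tr rho = 1.

(* ampliation id_k (x) E acting on 'M_(k*m) = M_k (x) M_m, indices (i, x) *)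
Definition ampl (k : nat) {m n : nat} (E : 'M[C]_m -> 'M[C]_n)
  (X : 'M[C]_(k * m)) : 'M[C]_(k * n) :=
  \matrix_(p, q)
    let: (i, y) := mxtens_unindex p in
    let: (j, y') := mxtens_unindex q in
    E (\matrix_(x, x') X (mxtens_index (i, x)) (mxtens_index (j, x'))) y y'.

Arguments ampl k {m n} E X.

Definition completely_positive {m n : nat} (E : 'M[C]_m -> 'M[C]_n) : Prop :=
  forall (k : nat) (X : 'M[C]_(k * m)), psd X -> psd (ampl k E X).

Definition trace_preserving {m n : nat} (E : 'M[C]_m -> 'M[C]_n) : Prop :=
  forall X, \tr (E X) = \tr X.

Definition channel {m n : nat} (E : 'M[C]_m -> 'M[C]_n) : Prop :=
  linear E /\ completely_positive E /\ trace_preserving E.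

(* e^{-i H t} for H = sum_x a_x |x><x| : diag(e^{-i a_x t}) *)
Definition evol {m : nat} (a : 'I_m -> R) (t : R) : 'M[C]_m :=
  diag_mx (\row_x (Complex (cos (a x * t)) (- sin (a x * t)))).

Definition dephase {m : nat} (rho : 'M[C]_m) : 'M[C]_m :=
  diag_mx (\row_x rho x x).

Definition time_covariant {m n : nat} (a : 'I_m -> R) (b : 'I_n -> R)
  (E : 'M[C]_m -> 'M[C]_n) : Prop :=
  forall (t : R) (rho : 'M[C]_m), density rho ->
    E (evol a t *m rho *m evol a (- t)) = evol b t *m E rho *m evol b (- t).

Definition rel_nondegenerate {m n : nat} (a : 'I_m -> R) (b : 'I_n -> R) : Prop :=
  forall (x x' : 'I_m) (y y' : 'I_n), a x - a x' = b y - b y' -> x = x' /\ y = y'.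

End QDefs.

From HB Require Import structures.
From mathcomp Require Import all_boot all_order all_algebra.
From mathcomp Require Import complex mxtens.
From mathcomp Require Import reals trigo boolp.
From mathcomp Require Import ring.
Set Implicit Arguments. Unset Strict Implicit. Unset Printing Implicit Defensive.
Import Order.TTheory GRing.Theory Num.Theory.
Local Open Scope ring_scope.

(* Conjugation by the time evolutions multiplies the matrix unit |x><x'| by
   e^{-i(a_x - a_x')t}, and the (y,y') entry of an output by e^{-i(b_y - b_y')t}.
   Since densities span all matrices, covariance of a linear N forces
   e^{-i(a_x - a_x')t} N(|x><x'|)_{yy'} = e^{-i(b_y - b_y')t} N(|x><x'|)_{yy'} for
   all t, so a nonzero entry needs equal frequencies, i.e. x = x' and y = y' by
   relative non-degeneracy: N kills coherences and has diagonal outputs. The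
   converse holds because dephasing absorbs every diagonal phase. *)

Section Phase.
Variable R : realType.

Definition phase (s : R) : R[i] := Complex (cos s) (- sin s).

Lemma phaseD s1 s2 : phase s1 * phase s2 = phase (s1 + s2).
Proof.
have -> : phase s1 * phase s2 = Complex (cos s1 * cos s2 - (- sin s1) * (- sin s2))
   (cos s1 * (- sin s2) + (- sin s1) * cos s2) by [].
by rewrite /phase cosD sinD; congr Complex; ring.
Qed.

Lemma phase0 : phase 0 = 1.
Proof. by rewrite /phase cos0 sin0 oppr0. Qed.

Lemma phase_neq0 s : phase s != 0.
Proof.
apply/eqP => ps0; have := phaseD s (- s).
by rewrite ps0 mul0r subrr phase0 => /eqP; rewrite eq_sym oner_eq0.
Qed.

Lemma phaseDpi s : phase (s + pi) = - phase s.
Proof. by rewrite /phase cosDpi sinDpi. Qed.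

Lemma phase_freq_inj (al be : R) :
  (forall t, phase (al * t) = phase (be * t)) -> al = be.
Proof.
move=> eq_phase; apply/eqP; apply: contraT => neq_ab.
have ab_neq0 : al - be != 0 by rewrite subr_eq0.
pose t := pi / (al - be).
have : phase (be * t) = - phase (be * t).
  by rewrite -phaseDpi -eq_phase /t; congr phase; field.
move/eqP; rewrite -addr_eq0 -mulr2n mulrn_eq0 /=.
by rewrite (negPf (phase_neq0 _)).
Qed.

End Phase.

Section Dephasing.
Variables (R : realType) (m : nat) (a : 'I_m -> R).

Lemma evolE t : evol a t = diag_mx (\row_x phase (a x * t)).
Proof. by []. Qed.

Lemma evol_conjE t (M : 'M[R[i]]_m) :
  evol a t *m M *m evol a (- t) = \matrix_(i, j) (phase ((a i - a j) * t) * M i j).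
Proof.
apply/matrixP => i j; rewrite !evolE mul_diag_mx mul_mx_diag !mxE.
by rewrite mulrAC phaseD mulrBl mulrN.
Qed.

Lemma evol_conj_delta t (x x' : 'I_m) :
  evol a t *m delta_mx x x' *m evol a (- t) = phase ((a x - a x') * t) *: delta_mx x x'.
Proof.
apply/matrixP => i j; rewrite evol_conjE !mxE.
by case: (eqVneq i x) => [->|]; case: (eqVneq j x') => [->|] /=; rewrite ?mulr1 ?mulr0.
Qed.

Lemma dephase_evol_conj t (M : 'M[R[i]]_m) :
  dephase (evol a t *m M *m evol a (- t)) = dephase M.
Proof. by apply/matrixP => i j; rewrite evol_conjE !mxE subrr mul0r phase0 mul1r. Qed.

Lemma evol_conj_dephase t (M : 'M[R[i]]_m) :
  evol a t *m dephase M *m evol a (- t) = dephase M.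
Proof.
apply/matrixP => i j; rewrite evol_conjE !mxE.
by case: (eqVneq i j) => [->|_]; rewrite ?subrr ?mul0r ?phase0 ?mul1r ?mulr0n ?mulr0.
Qed.

Lemma dephase_id (M : 'M[R[i]]_m) : is_diag_mx M -> dephase M = M.
Proof.
move/is_diag_mxP => M_diag; apply/matrixP => i j; rewrite !mxE.
by case: (eqVneq i j) => [->|ij]; rewrite ?mulr1n // mulr0n M_diag.
Qed.

End Dephasing.

Lemma time_covariant_dephase_sandwich (R : realType) (m n : nat)
    (a : 'I_m -> R) (b : 'I_n -> R) (N : 'M[R[i]]_m -> 'M[R[i]]_n) :
  time_covariant a b (fun rho => dephase (N (dephase rho))).
Proof. by move=> t rho _; rewrite dephase_evol_conj evol_conj_dephase. Qed.

Section DensitySpan.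
Variables (R : realType) (m : nat).
Local Notation C := R[i].

Lemma outerE (u w : 'cV[C]_m) i j : (u *m adj w) i j = u i 0 * (w j 0)^*.
Proof. by rewrite !mxE big_ord1 !mxE. Qed.

Lemma adj_delta (i : 'I_m) (j : 'I_1) : adj (delta_mx i j : 'cV[C]_m) = delta_mx j i.
Proof. by apply/matrixP => k l; rewrite !mxE conjC_nat andbC. Qed.

Lemma delta_mx_outer (i j : 'I_m) :
  delta_mx i j = delta_mx i 0 *m adj (delta_mx j 0 : 'cV[C]_m).
Proof. by rewrite adj_delta mul_delta_mx. Qed.

Lemma psd_outer (v : 'cV[C]_m) : psd (v *m adj v).
Proof.
move=> w; rewrite mulmxA -mulmxA mxE big_ord1.
suff -> : (adj v *m w) 0 0 = ((adj w *m v) 0 0)^* by apply: mul_conjC_ge0.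
by rewrite !mxE rmorph_sum; apply: eq_bigr => k _; rewrite !mxE rmorphM /= conjCK mulrC.
Qed.

Lemma mxtrace_outer (v : 'cV[C]_m) : \tr (v *m adj v) = \sum_i v i 0 * (v i 0)^*.
Proof. by apply: eq_bigr => i _; apply: outerE. Qed.

Lemma outer_eq0 (v : 'cV[C]_m) : \tr (v *m adj v) = 0 -> v *m adj v = 0.
Proof.
rewrite mxtrace_outer => /eqP; rewrite psumr_eq0 => [/allP v0|i _]; last first.
  exact: mul_conjC_ge0.
apply/matrixP => i j; rewrite outerE mxE.
have /implyP/(_ isT) := v0 i (mem_index_enum i).
by rewrite mulf_eq0 conjC_eq0 orbb => /eqP ->; rewrite mul0r.
Qed.

Lemma density_outer (v : 'cV[C]_m) :
  \tr (v *m adj v) != 0 -> density ((\tr (v *m adj v))^-1 *: (v *m adj v)).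
Proof.
move=> tr_neq0; split; last by rewrite mxtraceZ mulVf.
move=> w; rewrite -scalemxAr -scalemxAl mxE mulr_ge0 ?psd_outer // invr_ge0.
by rewrite mxtrace_outer sumr_ge0 // => i _; apply: mul_conjC_ge0.
Qed.

Lemma outer_polarization (u w : 'cV[C]_m) :
  u *m adj w = 2^-1 *: ((u + w) *m adj (u + w) - u *m adj u - w *m adj w
    + 'i *: ((u + 'i *: w) *m adj (u + 'i *: w) - u *m adj u - w *m adj w)).
Proof.
apply/matrixP => i j; rewrite !(outerE, mxE) !rmorphD !rmorphM /= conjCi.
have ii : 'i * 'i = -1 :> C by rewrite -expr2 sqrCi.
set z := 'i in ii *; set ui := u i 0; set uj := u j 0; set wi := w i 0; set wj := w j 0.
have -> : (ui + wi) * (uj^* + wj^*) - ui * uj^* - wi * wj^* +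
  z * ((ui + z * wi) * (uj^* + - z * wj^*) - ui * uj^* - wi * wj^*) =
  2 * (ui * wj^*) + (z * z + 1) * (wi * uj^* - ui * wj^* - z * wi * wj^*) by ring.
by rewrite ii addNr mul0r addr0 mulKf // pnatr_eq0.
Qed.

Lemma linear_eq0_on_densities (V : lmodType C) (f : {linear 'M[C]_m -> V}) :
  (forall rho, density rho -> f rho = 0) -> forall X, f X = 0.
Proof.
move=> f_density.
have f_outer_sq (v : 'cV[C]_m) : f (v *m adj v) = 0.
  have [tr0|tr_neq0] := eqVneq (\tr (v *m adj v)) 0.
    by rewrite (outer_eq0 tr0) linear0.
  rewrite -[v *m adj v](scalerKV tr_neq0) linearZZ f_density ?scaler0 //.
  exact: density_outer.
have f_outer (u w : 'cV[C]_m) : f (u *m adj w) = 0.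
  by rewrite outer_polarization linearZZ linearD linearZZ !linearB !f_outer_sq /=
    !scaler0 !subrr addr0 scaler0.
move=> X; rewrite (matrix_sum_delta X) linear_sum big1 // => i _.
by rewrite linear_sum big1 // => j _; rewrite linearZZ delta_mx_outer f_outer scaler0.
Qed.

End DensitySpan.

Section Covariance.
Variables (R : realType) (m n : nat) (a : 'I_m -> R) (b : 'I_n -> R).
Variable N : 'M[R[i]]_m -> 'M[R[i]]_n.
Hypothesis N_linear : linear N.

HB.instance Definition _ := GRing.isLinear.Build _ _ _ _ N N_linear.

Definition covariance_defect t X :=
  N (evol a t *m X *m evol a (- t)) - evol b t *m N X *m evol b (- t).

Fact covariance_defect_is_linear t : linear (covariance_defect t).
Proof.
move=> c X Y; rewrite /covariance_defect !(mulmxDr, mulmxDl) -!(scalemxAr, scalemxAl).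
rewrite !linearP !(mulmxDr, mulmxDl) -!(scalemxAr, scalemxAl) scalerBr.
by rewrite opprD addrACA.
Qed.

HB.instance Definition _ t :=
  GRing.isLinear.Build _ _ _ _ (covariance_defect t) (covariance_defect_is_linear t).

Hypothesis N_covariant : time_covariant a b N.

Lemma time_covariantE t X :
  N (evol a t *m X *m evol a (- t)) = evol b t *m N X *m evol b (- t).
Proof.
apply/eqP; rewrite -subr_eq0; apply/eqP; change (covariance_defect t X = 0).
apply: linear_eq0_on_densities => rho rho_density.
by rewrite /= /covariance_defect N_covariant // subrr.
Qed.

Lemma covariant_delta_entry t x x' y y' :
  phase ((a x - a x') * t) * N (delta_mx x x') y y' =
  phase ((b y - b y') * t) * N (delta_mx x x') y y'.
Proof.
have := time_covariantE t (delta_mx x x').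
by rewrite evol_conj_delta linearZZ evol_conjE => /matrixP/(_ y y'); rewrite !mxE.
Qed.

Hypothesis ab_nondegenerate : rel_nondegenerate a b.

Lemma covariant_delta_support x x' y y' :
  N (delta_mx x x') y y' != 0 -> x = x' /\ y = y'.
Proof.
move=> N_xy_neq0; apply: ab_nondegenerate; apply: phase_freq_inj => t.
exact: (mulIf N_xy_neq0 (covariant_delta_entry _ _ _ _ _)).
Qed.

Lemma covariant_offdiag x x' : x != x' -> N (delta_mx x x') = 0.
Proof.
move=> neq_xx'; apply/matrixP => y y'; rewrite mxE; apply/eqP.
by apply: contraR neq_xx' => /covariant_delta_support [-> _].
Qed.

Lemma covariant_is_diag X : is_diag_mx (N X).
Proof.
apply/is_diag_mxP => y y' neq_yy'.
rewrite (matrix_sum_delta X) linear_sum summxE big1 // => x _.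
rewrite linear_sum summxE big1 // => x' _; rewrite linearZZ mxE; apply/eqP.
rewrite mulf_eq0; apply/orP; right.
by apply: contraR neq_yy' => /covariant_delta_support [_ ->].
Qed.

Lemma covariant_dephase X : N (dephase X) = N X.
Proof.
rewrite /dephase diag_mx_sum_delta [in RHS](matrix_sum_delta X) !linear_sum.
apply: eq_bigr => x _; rewrite mxE linear_sum (bigD1 x) //= big1 ?addr0 //.
move=> x' neq_x'x.
by rewrite linearZZ /= covariant_offdiag 1?eq_sym // scaler0.
Qed.

End Covariance.

Theorem theorem2 (R : realType) (m n : nat) (a : 'I_m -> R) (b : 'I_n -> R)
  (N : 'M[R[i]]_m -> 'M[R[i]]_n) :
  rel_nondegenerate a b -> channel N ->
  (time_covariant a b N <-> N = (fun rho => dephase (N (dephase rho)))).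
Proof.
move=> ab_nondegenerate [N_linear _]; split=> [N_covariant | ->].
  apply: funext => rho.
  rewrite (covariant_dephase N_linear N_covariant ab_nondegenerate) dephase_id //.
  exact: (covariant_is_diag N_linear N_covariant ab_nondegenerate).
exact: time_covariant_dephase_sandwich.
Qed.
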